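(* Let $k\ge3$, let $G$ be a graph and $L$ a $k$-list assignment for $G$. Let $B$ be a bug in $G$ with root $r$ satisfying $d_G(r)\le k$, and suppose that the number of neighbors of $r$ in $V(G)\setminus V(B)$ is less than $|V(B)|$ and $|V(B)|\le k$. If $B$ has a hidden vertex, then $B$ is safe in $G$.
   Context: $V_{3^+}(G)$ is the set of vertices of degree at least $3$ in $G$. A bug in $G$ is an induced connected subgraph $B$ together with a vertex $r\in V(B)$, its root, such that $V(B)\cap V_{3^+}(G)\subseteq\{r\}$. A vertex $y\in V(B)$ is hidden if $N_G(y)\subseteq V(B)$. A $k$-list assignment $L$ assigns to each vertex $v$ a set $L(v)$ of exactly $k$ colors; an $L$-coloring is a proper vertex coloring $f$ with $f(v)\in L(v)$. For an integer $n$ and $k\ge1$, $n\bmod^* k$ is the unique $m\in\{1,\dots,k\}$ with $n\equiv m\pmod k$. If $|V(G)|=n\ge 1$, an $L$-coloring $f$ of $G$ is strongly equitable (SE) if every color class has at most $\lceil n/k\rceil$ vertices and the number of colors whose class has exactly $\lceil n/k\rceil$ vertices (the full classes) is at most $n\bmod^* k$; the empty graph is regarded as SE $L$-colorable. A subgraph $S\subseteq G$ is safe in $G$ if every SE $L$-coloring of $G-V(S)$ (with the restriction of $L$) can be extended to an SE $L$-coloring of $G$. *)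

From mathcomp Require Import all_boot.
Set Implicit Arguments. Unset Strict Implicit. Unset Printing Implicit Defensive.

Definition simple_graph (T : finType) (e : rel T) : Prop :=
  symmetric e /\ irreflexive e.

Section Defs.
Variables (T : finType) (e : rel T).

Definition deg (v : T) : nat := #|[set u | e v u]|.

Definition V3plus : {set T} := [set v | 3 <= deg v].

(* B (given by its vertex set VB, as an induced subgraph) is connected *)
Definition induced_connected (VB : {set T}) : Prop :=
  forall x y, x \in VB -> y \in VB ->
    connect [rel a b | [&& e a b, a \in VB & b \in VB]] x y.

Definition is_bug (VB : {set T}) (r : T) : Prop :=
  [/\ r \in VB, induced_connected VB & VB :&: V3plus \subset [set r]].

Definition hidden (VB : {set T}) (y : T) : Prop :=
  y \in VB /\ [set u | e y u] \subset VB.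

Definition ceil_div (n k : nat) : nat := (n + k.-1) %/ k.
Definition modstar (n k : nat) : nat := if n %% k == 0 then k else n %% k.

Variable C : finType.

(* f is an L-colouring of the induced subgraph G[U] (values of f outside U are ignored) *)
Definition L_coloring (L : T -> {set C}) (U : {set T}) (f : T -> C) : Prop :=
  (forall v, v \in U -> f v \in L v) /\
  (forall x y, x \in U -> y \in U -> e x y -> f x != f y).

Definition SE_coloring (k : nat) (L : T -> {set C}) (U : {set T}) (f : T -> C) : Prop :=
  L_coloring L U f /\
  (#|U| = 0 \/
   ((forall c : C, #|[set v in U | f v == c]| <= ceil_div #|U| k) /\
    #|[set c : C | #|[set v in U | f v == c]| == ceil_div #|U| k]| <= modstar #|U| k)).

Definition safe (k : nat) (L : T -> {set C}) (VS : {set T}) : Prop :=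
  forall f : T -> C, SE_coloring k L (~: VS) f ->
    exists g : T -> C, SE_coloring k L [set: T] g /\ (forall v, v \in ~: VS -> g v = f v).

End Defs.

From mathcomp Require Import all_boot zify.
Set Implicit Arguments. Unset Strict Implicit. Unset Printing Implicit Defensive.

(* Colour the vertices of B greedily, the root first and a hidden vertex y last, each from
   its list minus the colours of its neighbours outside B, using distinct colours and avoiding
   the set S of full colours of the given colouring whenever possible. A non-root vertex of a
   bug has degree at most 2 and a neighbour in B, so it loses at most one colour to the outside;
   y loses none and the root loses fewer than |B|. Hence either no vertex of B receives a colour
   of S, or at least k - |S| vertices of B avoid S. With n the number of vertices outside B,
   q = ceil(n/k) and m = n mod* k, adding |B| <= k vertices in distinct colours keeps the
   colouring strongly equitable:
   if m + |B| <= k the ceiling stays q and the full classes are among S and the |B| new colours;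
   otherwise the ceiling becomes q + 1 and only colours of S used on B are full, at most
   |B| - (k - |S|) <= m + |B| - k of them. *)

Lemma ceil_div_modstar_eq k q m n : 0 < k -> 0 < q -> 0 < m <= k ->
  n = q.-1 * k + m -> ceil_div n k = q /\ modstar n k = m.
Proof.
move=> k_gt0 q_gt0 /andP[m_gt0 m_le_k] ->; split.
  rewrite /ceil_div; have -> : q.-1 * k + m + k.-1 = q * k + m.-1.
    by rewrite -[in RHS](prednK q_gt0) mulSn; lia.
  by rewrite divnMDl // divn_small ?addn0 //; lia.
rewrite /modstar modnMDl; have [m_lt_k | m_ge_k] := ltnP m k.
  by rewrite modn_small // (negbTE (lt0n_neq0 m_gt0)).
have -> : m = k by lia.
by rewrite modnn.
Qed.

Lemma ceil_div_modstar_decomp k n : 0 < k -> 0 < n ->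
  [/\ n = (ceil_div n k).-1 * k + modstar n k, 0 < modstar n k <= k & 0 < ceil_div n k].
Proof.
move=> k_gt0 n_gt0.
suff [q [m [q_gt0 m_bnd def_n]]] : exists q m, [/\ 0 < q, 0 < m <= k & n = q.-1 * k + m].
  by have [-> ->] := ceil_div_modstar_eq k_gt0 q_gt0 m_bnd def_n.
have def_n := divn_eq n k; have lt_mod := ltn_pmod n k_gt0.
have [mod0 | mod_gt0] := posnP (n %% k).
  exists (n %/ k), k; rewrite mod0 addn0 in def_n.
  have q_gt0 : 0 < n %/ k by move: def_n; case: (n %/ k) => //; lia.
  split; rewrite ?k_gt0 ?leqnn //.
  by rewrite {1}def_n -[in LHS](prednK q_gt0) mulSn addnC.
by exists (n %/ k).+1, (n %% k); split; rewrite // mod_gt0 ltnW.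
Qed.

Lemma exists_fresh_colour (C : finType) (A U S : {set C}) : #|U| < #|A| ->
  exists2 c, c \in A :\: U & (c \in S -> A :\: S \subset U).
Proof.
move=> ltUA; case: (set0Pn (A :\: U :\: S)) => [[c] | noAUS].
  by rewrite !inE => /and3P[cS cU cA]; exists c; rewrite ?inE ?cU ?cA // (negbTE cS).
have /set0Pn[c cAU] : A :\: U != set0.
  by rewrite -card_gt0 cardsD; have := subset_leq_card (subsetIr A U); lia.
exists c => // _; apply/subsetP => z; rewrite inE => /andP[zS zA].
by apply/negPn/negP => zU; apply: noAUS; exists z; rewrite !inE zS zU zA.
Qed.

Definition before (T : finType) (s : seq T) (v : T) : {set T} :=
  [set x in s | index x s < index v s].

Section Before.
Variables (T : finType) (s : seq T) (v : T).
Hypothesis v_notin_s : v \notin s.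

Lemma before_rcons w : w \in s -> before (rcons s v) w = before s w.
Proof.
move=> ws; apply/setP => x; rewrite !inE mem_rcons in_cons -!cats1 !index_cat ws.
have [xs | xNs] := boolP (x \in s); first by rewrite orbT.
rewrite orbF; case: eqP => [xv | _] //=.
by rewrite ltnNge (leq_trans (ltnW _) (leq_addr _ _)) ?index_mem.
Qed.

Lemma before_rcons_last : before (rcons s v) v = [set x in s].
Proof.
apply/setP => x; rewrite !inE mem_rcons in_cons -!cats1 !index_cat (negbTE v_notin_s).
rewrite /= eqxx addn0; have [xs | xNs] := boolP (x \in s); first by rewrite orbT index_mem.
by rewrite orbF ltnNge leq_addr andbF.
Qed.

End Before.

Lemma greedy_distinct_choice (T C : finType) (A : T -> {set C}) (S : {set C})
    (g0 : T -> C) (s : seq T) :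
  uniq s -> (forall v, v \in s -> index v s < #|A v|) ->
  exists g : T -> C, [/\ {in s, forall v, g v \in A v}, {in s &, injective g} &
    {in s, forall v, g v \in S ->
       A v :\: S \subset g @: [set x in before s v | g x \notin S]}].
Proof.
elim/last_ind: s => [|s v IH]; first by exists g0.
rewrite rcons_uniq => /andP[vNs s_uniq] idx_lt.
have idx_s w : w \in s -> index w (rcons s v) = index w s.
  by move=> ws; rewrite -cats1 index_cat ws.
have idx_v : index v (rcons s v) = size s.
  by rewrite -cats1 index_cat (negbTE vNs) /= eqxx addn0.
have idx_lt_s w : w \in s -> index w s < #|A w|.
  by move=> ws; rewrite -idx_s // idx_lt // mem_rcons in_cons ws orbT.
have [g [gA g_inj g_pref]] := IH s_uniq idx_lt_s.
have used_lt : #|g @: [set x in s]| < #|A v|.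
  rewrite (leq_ltn_trans (leq_imset_card _ _)) // cardsE (card_uniqP s_uniq) -idx_v.
  by rewrite idx_lt // mem_rcons mem_head.
have [c /setDP[cA c_fresh] c_pref] := exists_fresh_colour S used_lt.
pose g' x := if x == v then c else g x.
have g'_s : {in s, g' =1 g}.
  by move=> x xs; rewrite /g'; case: eqP => // xv; rewrite -xv xs in vNs.
have g'_v : g' v = c by rewrite /g' eqxx.
have g_used x : x \in s -> g x != c.
  by move=> xs; apply: contraNneq c_fresh => <-; rewrite imset_f ?inE.
exists g'; split.
- move=> w; rewrite mem_rcons in_cons => /predU1P[-> | ws]; first by rewrite g'_v.
  by rewrite g'_s ?gA.
- move=> x y; rewrite !mem_rcons !in_cons.
  case/predU1P=> [-> | xs]; case/predU1P=> [-> | ys] //; rewrite ?g'_v ?g'_s //.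
  + by move/esym/eqP; rewrite (negbTE (g_used y ys)).
  + by move/eqP; rewrite (negbTE (g_used x xs)).
  + exact: g_inj.
- move=> w; rewrite mem_rcons in_cons => /predU1P[-> | ws].
    rewrite g'_v before_rcons_last // => /c_pref /subsetP used_all.
    apply/subsetP => z zAS; have [x] := imsetP (used_all z zAS); rewrite inE => xs def_z.
    move: zAS; rewrite inE def_z -g'_s // => /andP[g'xS _].
    by rewrite imset_f // !inE xs g'xS.
  rewrite g'_s // before_rcons //.
  have -> : [set x in before s w | g' x \notin S] = [set x in before s w | g x \notin S].
    by apply/setP => x; rewrite !inE; case: (boolP (x \in s)) => //= xs; rewrite g'_s.
  rewrite (eq_in_imset (g := g)); first exact: g_pref.
  by move=> x; rewrite !inE => /andP[/andP[xs _] _]; rewrite g'_s.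
Qed.

Lemma exists_enum_first_last (T : finType) (A : {set T}) x y : x \in A -> y \in A ->
  exists s : seq T, [/\ uniq s, s =i A,
    {in A, forall z, z != y -> index z s < index y s} & x != y -> index x s = 0].
Proof.
move=> xA yA; pose s1 := [seq z <- x :: enum (A :\ x) | z != y].
have mem_s1 z : (z \in s1) = (z \in A) && (z != y).
  rewrite mem_filter in_cons mem_enum !inE andbC; case: eqP => [-> | _] //=.
  by rewrite xA.
have idx_y : index y (rcons s1 y) = size s1.
  by rewrite -cats1 index_cat mem_s1 eqxx andbF /= eqxx addn0.
exists (rcons s1 y); split.
- rewrite rcons_uniq mem_s1 eqxx andbF /=; apply: filter_uniq.
  by rewrite /= mem_enum !inE eqxx enum_uniq.
- by move=> z; rewrite mem_rcons in_cons mem_s1; case: eqP => [-> | _] //=; rewrite andbT.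
- move=> z zA zy; rewrite idx_y -cats1 index_cat.
  have zs1 : z \in s1 by rewrite mem_s1 zA.
  by rewrite zs1 index_mem.
- by move=> xy; rewrite /s1 /= xy /= eqxx.
Qed.

Section EquitableCounts.
Variables (T C : finType) (k : nat).

Definition colour_class (U : {set T}) (f : T -> C) (c : C) : {set T} :=
  [set v in U | f v == c].

Definition full_colours (U : {set T}) (f : T -> C) : {set C} :=
  [set c | #|colour_class U f c| == ceil_div #|U| k].

(* [SE_coloring e k L U f] unfolds to [L_coloring e L U f /\ (#|U| = 0 \/ equitable k U f)]. *)
Definition equitable (U : {set T}) (f : T -> C) : Prop :=
  (forall c, #|colour_class U f c| <= ceil_div #|U| k) /\
  #|full_colours U f| <= modstar #|U| k.

Lemma equitable_injective (U : {set T}) (g : T -> C) :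
  0 < k -> 0 < #|U| <= k -> {in U &, injective g} -> equitable U g.
Proof.
move=> k_gt0 /andP[U_gt0 U_le_k] g_inj; rewrite /equitable /full_colours.
have [-> ->] : ceil_div #|U| k = 1 /\ modstar #|U| k = #|U|.
  by apply: ceil_div_modstar_eq; rewrite ?U_gt0.
split=> [c | ].
  apply/card_le1_eqP => x y; rewrite !inE => /andP[xU /eqP gx] /andP[yU /eqP gy].
  by apply: g_inj; rewrite ?gx ?gy.
apply: leq_trans (leq_imset_card g U); apply/subset_leq_card/subsetP => c.
rewrite inE => /eqP class1; have /card_gt0P[x] : 0 < #|colour_class U g c| by rewrite class1.
rewrite inE => /andP[xU /eqP <-].
exact: imset_f.
Qed.

Definition glue (VB : {set T}) (g f : T -> C) (v : T) : C := if v \in VB then g v else f v.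

Section Glue.
Variables (VB : {set T}) (f g : T -> C).
Hypotheses (k_gt0 : 0 < k) (outside_gt0 : 0 < #|~: VB|) (VB_le_k : #|VB| <= k).
Hypothesis g_inj : {in VB &, injective g}.
Hypothesis f_equitable : equitable (~: VB) f.
Local Notation S := (full_colours (~: VB) f).
Hypothesis nonfull_large : #|[set v in VB | g v \notin S]| = #|VB| \/
  k - #|S| <= #|[set v in VB | g v \notin S]|.

Local Notation q := (ceil_div #|~: VB| k).
Local Notation m := (modstar #|~: VB| k).

Lemma card_glue_class c :
  #|colour_class [set: T] (glue VB g f) c| = #|colour_class (~: VB) f c| + (c \in g @: VB).
Proof.
rewrite -(cardsID VB) addnC; congr (_ + _).
  by apply: eq_card => v; rewrite !inE /glue; case: (v \in VB).
have [/imsetP[x xVB ->] | cNg] := boolP (c \in g @: VB).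
  apply/eqP/cards1P; exists x; apply/setP => v; rewrite !inE /glue andbC.
  case vVB: (v \in VB) => /=; last by apply/esym/eqP => vx; rewrite vx xVB in vVB.
  by apply/eqP/eqP => [/g_inj -> | ->].
apply/eqP; rewrite cards_eq0; apply/eqP/setP => v; rewrite !inE /glue andbC.
by case vVB: (v \in VB) => //=; apply: contraNF cNg => /eqP <-; rewrite imset_f.
Qed.

Lemma card_setT_VB : #|[set: T]| = #|~: VB| + #|VB|.
Proof. by rewrite cardsT -(cardsC VB) addnC. Qed.

Lemma full_colours_le_m : #|S| <= m.
Proof. by case: f_equitable. Qed.

Lemma equitable_glue_fits : m + #|VB| <= k -> equitable [set: T] (glue VB g f).
Proof.
move=> fits; have [def_n /andP[m_gt0 _] q_gt0] := ceil_div_modstar_decomp k_gt0 outside_gt0.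
rewrite /equitable /full_colours.
have [-> ->] : ceil_div #|[set: T]| k = q /\ modstar #|[set: T]| k = m + #|VB|.
  apply: ceil_div_modstar_eq => //; first by rewrite fits addn_gt0 m_gt0.
  by rewrite card_setT_VB; lia.
have g_nonfull v : v \in VB -> g v \notin S.
  have S_le := full_colours_le_m.
  have : [set v in VB | g v \notin S] == VB.
    rewrite eqEcard; apply/andP; split; first by apply/subsetP => x; rewrite inE => /andP[].
    by case: nonfull_large => [-> // | ]; lia.
  by move=> /eqP XVB; rewrite -{1}XVB inE => /andP[].
case: f_equitable => [f_le _]; split=> [c | ].
  rewrite card_glue_class; have [/imsetP[x xVB ->] | _] := boolP (c \in g @: VB).
    by move: (g_nonfull x xVB); rewrite addn1 inE ltn_neqAle => ->; rewrite f_le.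
  by rewrite addn0 f_le.
have sub : [set c | #|colour_class [set: T] (glue VB g f) c| == q] \subset S :|: g @: VB.
  apply/subsetP => c; rewrite !inE card_glue_class; case: (c \in g @: VB); rewrite ?orbT //.
  by rewrite addn0 orbF.
apply: leq_trans (subset_leq_card sub) _; rewrite cardsU.
have := leq_imset_card g VB; have := full_colours_le_m; lia.
Qed.

Lemma equitable_glue_overflows : k < m + #|VB| -> equitable [set: T] (glue VB g f).
Proof.
move=> overflow; have [def_n /andP[_ m_le_k] q_gt0] := ceil_div_modstar_decomp k_gt0 outside_gt0.
rewrite /equitable /full_colours.
have [-> ->] : ceil_div #|[set: T]| k = q.+1 /\ modstar #|[set: T]| k = m + #|VB| - k.
  apply: ceil_div_modstar_eq => //; first by apply/andP; lia.
  have qk : q * k = q.-1 * k + k by rewrite -[in LHS](prednK q_gt0) mulSn addnC.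
  rewrite card_setT_VB /=; lia.
case: f_equitable => [f_le _]; split=> [c | ].
  by rewrite card_glue_class -addn1 leq_add // leq_b1.
set Y := [set v in VB | g v \in S].
have sub : [set c | #|colour_class [set: T] (glue VB g f) c| == q.+1] \subset g @: Y.
  apply/subsetP => c; rewrite inE card_glue_class.
  have [/imsetP[x xVB ->] | _] := boolP (c \in g @: VB).
    by rewrite addn1 eqSS => full; apply: imset_f; rewrite !inE xVB full.
  by rewrite addn0 => /eqP cl; have := f_le c; lia.
apply: leq_trans (subset_leq_card sub) (leq_trans (leq_imset_card g Y) _).
have XY : #|[set v in VB | g v \notin S]| + #|Y| = #|VB|.
  rewrite -(cardsID [set v | g v \in S] VB) addnC.
  by congr (_ + _); apply: eq_card => v; rewrite !inE // andbC.
have := full_colours_le_m; case: nonfull_large; lia.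
Qed.

Lemma equitable_glue : equitable [set: T] (glue VB g f).
Proof.
have [fits | overflows] := leqP (m + #|VB|) k.
  exact: equitable_glue_fits.
exact: equitable_glue_overflows.
Qed.

End Glue.

End EquitableCounts.

Section BugExtension.
Variables (T C : finType) (e : rel T) (k : nat) (L : T -> {set C}).
Variables (VB : {set T}) (r : T) (f : T -> C).

Definition outer_nbrs (v : T) : {set T} := [set u in ~: VB | e v u].

Definition free_colours (v : T) : {set C} := L v :\: f @: outer_nbrs v.

Lemma card_free_colours v : #|L v| - #|outer_nbrs v| <= #|free_colours v|.
Proof.
rewrite cardsD; have := subset_leq_card (subsetIr (L v) (f @: outer_nbrs v)).
have := leq_imset_card f (outer_nbrs v); lia.
Qed.

Lemma hidden_outer_nbrs y : hidden e VB y -> outer_nbrs y = set0.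
Proof.
case=> _ /subsetP y_nbrs; apply/setP => u; rewrite !inE; apply/negP => /andP[uNB yu].
by move: uNB; rewrite y_nbrs // inE.
Qed.

Lemma bug_outer_nbrs v : is_bug e VB r -> v \in VB -> v != r -> #|outer_nbrs v| <= 1.
Proof.
case=> rVB VB_conn V3_sub vVB vr.
have deg_v : deg e v <= 2.
  rewrite leqNgt; apply: contra vr => deg3.
  by have := subsetP V3_sub v; rewrite !inE vVB deg3; apply.
have [w vw wVB] : exists2 w, e v w & w \in VB.
  have /connectP[[| w p] /=] := VB_conn v r vVB rVB; first by move=> _ rv; rewrite rv eqxx in vr.
  by case/andP=> /and3P[vw _ wVB] _ _; exists w.
have : outer_nbrs v \subset [set u | e v u] :\ w.
  apply/subsetP => u; rewrite !inE => /andP[uNB vu]; rewrite vu andbT.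
  by apply: contraNneq uNB => ->.
move/subset_leq_card; move: deg_v; rewrite /deg (cardsD1 w) inE vw; lia.
Qed.

Lemma glue_L_coloring g : simple_graph e -> L_coloring e L (~: VB) f ->
  {in VB, forall v, g v \in free_colours v} -> {in VB &, injective g} ->
  L_coloring e L [set: T] (glue VB g f).
Proof.
case=> e_sym e_irr [fL f_proper] g_free g_inj; split=> [v _ | x y _ _ xy]; rewrite /glue.
  case: ifP => vVB; last by rewrite fL // inE vVB.
  by have := g_free v vVB; rewrite inE => /andP[].
case: ifP => xVB; case: ifP => yVB.
- by apply: contraTneq xy => /g_inj ->; rewrite ?e_irr.
- have := g_free x xVB; rewrite inE => /andP[gx _].
  by apply: contraNneq gx => ->; rewrite imset_f // !inE yVB xy.
- have := g_free y yVB; rewrite inE => /andP[gy _].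
  by apply: contraNneq gy => <-; rewrite imset_f // !inE xVB e_sym xy.
- by apply: f_proper; rewrite ?inE ?xVB ?yVB.
Qed.

Section GreedyOrder.
Variables (s : seq T) (y : T).
Hypotheses (bug : is_bug e VB r) (L_card : forall v, #|L v| = k).
Hypotheses (root_outer : #|outer_nbrs r| < #|VB|) (VB_le_k : #|VB| <= k).
Hypothesis y_hidden : hidden e VB y.
Hypotheses (s_uniq : uniq s) (s_VB : s =i VB).
Hypothesis y_last : {in VB, forall z, z != y -> index z s < index y s}.
Hypothesis r_first : r != y -> index r s = 0.

Let free_ge u : k - #|outer_nbrs u| <= #|free_colours u|.
Proof. by rewrite -(L_card u) card_free_colours. Qed.

Let yVB : y \in VB. Proof. by case: y_hidden. Qed.

Let rVB : r \in VB. Proof. by case: bug. Qed.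

Lemma index_lt_free_colours v : v \in s -> index v s < #|free_colours v|.
Proof.
rewrite s_VB => vVB.
have idx_y : index y s < #|VB|.
  by rewrite -(eq_card s_VB) (card_uniqP s_uniq) index_mem s_VB.
have [-> | vy] := eqVneq v y.
  by have := free_ge y; rewrite hidden_outer_nbrs // cards0; lia.
have [vr | vr] := eqVneq v r.
  by move: vy; rewrite vr => /r_first ->; have := free_ge r; lia.
by have := y_last vVB vy; have := free_ge v; have := bug_outer_nbrs bug vVB vr; lia.
Qed.

Lemma greedy_nonfull_large g (S : {set C}) :
  {in s, forall v, g v \in S ->
     free_colours v :\: S \subset g @: [set x in before s v | g x \notin S]} ->
  #|[set v in VB | g v \notin S]| = #|VB| \/
  k - #|S| <= #|[set v in VB | g v \notin S]|.
Proof.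
move=> g_pref; set X := [set v in VB | g v \notin S].
have blocked v : v \in VB -> g v \in S ->
    k - #|outer_nbrs v| - #|S| <= #|[set x in before s v | g x \notin S]|.
  move=> vVB gvS; have vs : v \in s by rewrite s_VB.
  have := subset_leq_card (g_pref v vs gvS).
  have := leq_imset_card g [set x in before s v | g x \notin S].
  have := free_ge v; have := subset_leq_card (subsetIr (free_colours v) S).
  rewrite cardsD; lia.
have before_X v : [set x in before s v | g x \notin S] \subset X.
  by apply/subsetP => x; rewrite !inE -s_VB => /andP[/andP[-> _] ->].
have [gyS | gyNS] := boolP (g y \in S).
  right; have := blocked y yVB gyS; rewrite hidden_outer_nbrs // cards0.
  by have := subset_leq_card (before_X y); lia.
have yX : y \in X by rewrite inE yVB.
case: (pickP [pred v | [&& v \in VB, v != r, v != y & g v \in S]]) =>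
    [v /and4P[vVB vr vy gvS] | others_nonfull].
  right; have : [set x in before s v | g x \notin S] \subset X :\ y.
    apply/subsetP => x xb; rewrite in_setD1 (subsetP (before_X v)) // andbT.
    apply: contraTneq xb => ->; rewrite !inE ltnNge ltnW /= ?andbF //.
    exact: y_last.
  move/subset_leq_card; rewrite (cardsD1 y X) yX.
  by have := blocked v vVB gvS; have := bug_outer_nbrs bug vVB vr; lia.
have nonfull v : v \in VB -> v != r -> v \in X.
  move=> vVB vr; rewrite inE vVB /=; have [-> // | vy] := eqVneq v y.
  by apply/negP => gvS; have := others_nonfull v; rewrite /= vVB vr vy gvS.
have [grS | grNS] := boolP (g r \in S).
  right; have ry : r != y by apply: contraNneq gyNS => <-.
  have before_r : #|[set x in before s r | g x \notin S]| = 0.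
    by apply/eqP; rewrite cards_eq0; apply/eqP/setP => x; rewrite !inE r_first // ltn0 andbF.
  have : VB :\ r \subset X by apply/subsetP => x; rewrite in_setD1 => /andP[xr xVB]; exact: nonfull.
  move/subset_leq_card; have := cardsD1 r VB; rewrite rVB.
  by have := blocked r rVB grS; rewrite before_r; lia.
left; apply/eqP; rewrite eqn_leq !subset_leq_card //.
  apply/subsetP => x xVB.
  by have [-> | /(nonfull x xVB) //] := eqVneq x r; rewrite inE rVB.
by apply/subsetP => x; rewrite inE => /andP[].
Qed.

End GreedyOrder.
End BugExtension.

Theorem corollary4p2 (T : finType) (e : rel T) (C : finType) (k : nat)
  (L : T -> {set C}) (VB : {set T}) (r : T) :
  simple_graph e ->
  3 <= k ->
  (forall v, #|L v| = k) ->
  is_bug e VB r ->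
  deg e r <= k ->
  #|[set u in ~: VB | e r u]| < #|VB| ->
  #|VB| <= k ->
  (exists y, hidden e VB y) ->
  safe e k L VB.
Proof.
move=> e_simple k_ge3 L_card bug _ root_outer VB_le_k [y y_hidden] f [f_col f_counts].
have [[rVB _ _] [yVB _]] := (bug, y_hidden).
have [s [s_uniq s_VB y_last r_first]] := exists_enum_first_last rVB yVB.
have [g [g_free g_inj g_pref]] := greedy_distinct_choice
  (full_colours k (~: VB) f) f s_uniq
  (index_lt_free_colours f bug L_card root_outer VB_le_k y_hidden s_uniq s_VB y_last r_first).
have g_inj_VB : {in VB &, injective g} by move=> x z; rewrite -!s_VB; exact: g_inj.
exists (glue VB g f); split; last by move=> v; rewrite inE /glue => /negbTE ->.
split; first by apply: glue_L_coloring => // v; rewrite -s_VB; exact: g_free.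
right; have k_gt0 : 0 < k by lia.
have [outside0 | outside_gt0] := posnP #|~: VB|.
  have inVB x : x \in VB.
    by apply: contraT => xNB; have := card0_eq outside0 x; rewrite inE xNB.
  apply: equitable_injective => // [|x z _ _]; last by rewrite /glue !inVB; exact: g_inj_VB.
  by rewrite cardsT -(cardsC VB) outside0 addn0 VB_le_k andbT; apply/card_gt0P; exists r.
case: f_counts => [outside0 | f_equitable]; first by rewrite outside0 in outside_gt0.
apply: equitable_glue => //.
exact: (greedy_nonfull_large bug L_card root_outer VB_le_k y_hidden s_uniq s_VB y_last r_first
  g_pref).
Qed.
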